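(* Let $\mu_1,\dots,\mu_n\in\mathrm{Prob}([-R,R])$ and $h\in C_\mathbb{R}([-R,R]^n)$. Let $\Xi(N)=(\xi_1(N),\dots,\xi_n(N))$ and $\Xi'(N)=(\xi_1'(N),\dots,\xi_n'(N))$ be two approximating sequences for $(\mu_1,\dots,\mu_n)$. Then $$\limsup_{N\to\infty}\frac1N\log\Biggl[\frac{1}{(N!)^n}\sum_{\sigma_1,\dots,\sigma_n\in S_N}\exp\bigl(N\kappa_N(h(\sigma_1(\xi_1(N)),\dots,\sigma_n(\xi_n(N))))\bigr)\Biggr]$$ is equal to the same expression with $\xi_i(N)$ replaced by $\xi_i'(N)$ for all $i$. That is, the mutual pressure $P_\mathrm{sym}(h:\mu_1,\dots,\mu_n)$ does not depend on the choice of the approximating sequence.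
   Context: Fix $R>0$ and $n\in\mathbb{N}$. $\mathrm{Prob}([-R,R]^n)$ denotes the set of Borel probability measures on $[-R,R]^n$, and $C_\mathbb{R}([-R,R]^n)$ the real Banach space of real continuous functions on $[-R,R]^n$ with the sup-norm $\|f\|=\max|f|$. For $\mathbf{x}=(x_1,\dots,x_N)\in\mathbb{R}^N$ let $\kappa_N(\mathbf{x})=\frac1N\sum_{j=1}^Nx_j$; powers $\mathbf{x}^k$ and products of vectors are taken coordinatewise. Let $[-R,R]_\le^N=\{(x_1,\dots,x_N)\in[-R,R]^N:x_1\le\dots\le x_N\}$. The symmetric group $S_N$ acts on $\mathbb{R}^N$ by $\sigma(\mathbf{x})=(x_{\sigma^{-1}(1)},\dots,x_{\sigma^{-1}(N)})$. An approximating sequence for $(\mu_1,\dots,\mu_n)$, $\mu_i\in\mathrm{Prob}([-R,R])$, is a sequence $\Xi(N)=(\xi_1(N),\dots,\xi_n(N))$, $N\in\mathbb{N}$, with $\xi_i(N)\in[-R,R]_\le^N$ and $\kappa_N(\xi_i(N)^k)\to\int x^k\,d\mu_i(x)$ as $N\to\infty$ for all $k\in\mathbb{N}$ and $1\le i\le n$. For $h\in C_\mathbb{R}([-R,R]^n)$ and $\mathbf{x}_i=(x_{i1},\dots,x_{iN})\in[-R,R]^N$, $1\le i\le n$, set $\kappa_N(h(\mathbf{x}_1,\dots,\mathbf{x}_n))=\frac1N\sum_{j=1}^Nh(x_{1j},\dots,x_{nj})$. The mutual pressure $P_\mathrm{sym}(h:\mu_1,\dots,\mu_n)$ is defined as the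 displayed $\limsup$ computed with an approximating sequence. *)

From Stdlib Require Import Reals.
From mathcomp Require Import all_boot perm.
Set Implicit Arguments.
Unset Strict Implicit.
Unset Printing Implicit Defensive.

Local Open Scope R_scope.

Definition Rsum (T : finType) (F : T -> R) : R := \big[Rplus/0]_(t : T) F t.

Definition in_int (Rb x : R) : Prop := - Rb <= x <= Rb.

Definition cont_int (Rb : R) (f : R -> R) : Prop :=
  forall x, in_int Rb x -> forall eps, 0 < eps -> exists d, 0 < d /\
    forall y, in_int Rb y -> Rabs (x - y) < d -> Rabs (f x - f y) < eps.

Definition cont_cube (n : nat) (Rb : R) (h : ('I_n -> R) -> R) : Prop :=
  forall x, (forall i, in_int Rb (x i)) -> forall eps, 0 < eps -> exists d, 0 < d /\
    forall y, (forall i, in_int Rb (y i)) ->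
      (forall i, Rabs (x i - y i) < d) -> Rabs (h x - h y) < eps.

(* A Borel probability measure on [-Rb,Rb], represented (Riesz) by its
   integration functional f |-> \int f dmu on C_R([-Rb,Rb]): linear, positive,
   normalized, depending only on the values on [-Rb,Rb]. *)
Record ProbInt (Rb : R) := {
  integ : (R -> R) -> R;
  integ_local : forall f g, (forall x, in_int Rb x -> f x = g x) -> integ f = integ g;
  integ_add : forall f g, cont_int Rb f -> cont_int Rb g ->
    integ (fun x => f x + g x) = integ f + integ g;
  integ_scal : forall a f, cont_int Rb f -> integ (fun x => a * f x) = a * integ f;
  integ_pos : forall f, cont_int Rb f -> (forall x, in_int Rb x -> 0 <= f x) ->
    0 <= integ f;
  integ_one : integ (fun _ => 1) = 1
}.

Definition kappa (N : nat) (x : 'I_N -> R) : R := / INR N * Rsum x.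

Definition in_sorted_cube (Rb : R) (N : nat) (x : 'I_N -> R) : Prop :=
  (forall j, in_int Rb (x j)) /\ (forall j j' : 'I_N, (j <= j')%N -> x j <= x j').

Definition approximating (n : nat) (Rb : R) (mu : 'I_n -> ProbInt Rb)
    (Xi : 'I_n -> forall N : nat, 'I_N -> R) : Prop :=
  (forall i N, in_sorted_cube Rb (Xi i N)) /\
  (forall i (k : nat),
     Un_cv (fun N => kappa (fun j => (Xi i N j) ^ k)) (integ (mu i) (fun x => x ^ k))).

Definition perm_act (N : nat) (s : {perm 'I_N}) (x : 'I_N -> R) : 'I_N -> R :=
  fun j => x ((s^-1)%g j).

Definition kappa_h (n N : nat) (h : ('I_n -> R) -> R) (x : 'I_n -> 'I_N -> R) : R :=
  kappa (fun j => h (fun i => x i j)).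

Definition pressure_term (n : nat) (h : ('I_n -> R) -> R)
    (Xi : 'I_n -> forall N : nat, 'I_N -> R) (N : nat) : R :=
  / INR N * ln (/ (INR (N`!)) ^ n *
    Rsum (fun s : {ffun 'I_n -> {perm 'I_N}} =>
      exp (INR N * kappa_h h (fun i => perm_act (s i) (Xi i N))))).

Definition is_limsup (u : nat -> R) (l : R) : Prop :=
  forall eps, 0 < eps ->
    (exists M, forall N, (M <= N)%nat -> u N < l + eps) /\
    (forall M, exists N, (M <= N)%nat /\ l - eps < u N).

From Stdlib Require Import Reals Lra Lia Classical ClassicalEpsilon FunctionalExtensionality.
From HB Require Import structures.
From mathcomp Require Import all_boot perm.
Set Implicit Arguments.
Unset Strict Implicit.
Unset Printing Implicit Defensive.
Local Open Scope R_scope.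

(* The N-th pressure term is (1/N) log of an average of exp (N kappa_h ...) over
   tuples of permutations, so it moves by at most c when every exponent
   kappa_h h (sigma(Xi(N))) moves by at most c (pressure_term_close).  A limsup
   is unchanged by a vanishing perturbation (is_limsup_transfer), hence it
   suffices to show that kappa_h h (sigma(Xi(N))) - kappa_h h (sigma(Xi'(N)))
   tends to 0 uniformly in sigma (kappa_h_perm_close).  Since h is uniformly
   continuous and bounded on the cube (Heine-Cantor, proved by bisection), this
   difference is at most eps plus a multiple of the proportions of indices k
   where xi_i(N)_k and xi'_i(N)_k are d apart; these proportions are invariant
   under permutations.  Finally, for two sorted vectors with asymptotically
   equal moments such proportions vanish (far_mean_vanishes): a gap between
   them forces a crossing of some grid level t, which is detected by the means
   of a polynomial approximating the step 1_{x <= t}, and polynomial means of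
   both sequences have the same limit. *)

Lemma Rplus_associative : associative Rplus.
Proof. by move=> a b c; rewrite Rplus_assoc. Qed.
HB.instance Definition _ :=
  Monoid.isComLaw.Build R 0 Rplus Rplus_associative Rplus_comm Rplus_0_l.
HB.instance Definition _ := Monoid.isMulLaw.Build R 0 Rmult Rmult_0_l Rmult_0_r.
HB.instance Definition _ :=
  Monoid.isAddLaw.Build R Rmult Rplus Rmult_plus_distr_r Rmult_plus_distr_l.

Section FiniteSums.
Variables (I : Type) (r : seq I) (P : pred I).

Lemma sumR_le (F G : I -> R) : (forall i, P i -> F i <= G i) ->
  \big[Rplus/0]_(i <- r | P i) F i <= \big[Rplus/0]_(i <- r | P i) G i.
Proof. by move=> H; apply: (big_ind2 (fun a b => a <= b)) => *; lra || auto. Qed.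

Lemma sumR_ge0 (F : I -> R) : (forall i, P i -> 0 <= F i) ->
  0 <= \big[Rplus/0]_(i <- r | P i) F i.
Proof. by move=> H; apply: (big_ind (fun a => 0 <= a)) => *; lra || auto. Qed.

Lemma sumR_abs (F : I -> R) :
  Rabs (\big[Rplus/0]_(i <- r | P i) F i) <= \big[Rplus/0]_(i <- r | P i) Rabs (F i).
Proof.
apply: (big_ind2 (fun a b => Rabs a <= b)) => [|a b c d H1 H2|] //.
- by rewrite Rabs_R0; lra.
- by apply: Rle_trans (Rabs_triang _ _) _; lra.
- by move=> *; lra.
Qed.

Lemma sumR_sub (F G : I -> R) :
  \big[Rplus/0]_(i <- r | P i) (F i - G i) =
  \big[Rplus/0]_(i <- r | P i) F i - \big[Rplus/0]_(i <- r | P i) G i.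
Proof.
elim: r => [|a s IH]; rewrite ?big_nil ?big_cons; first by ring.
by case: (P a); rewrite IH; ring.
Qed.

Lemma sumR_cv (u : I -> nat -> R) (l : I -> R) : (forall i, Un_cv (u i) (l i)) ->
  Un_cv (fun N => \big[Rplus/0]_(i <- r | P i) u i N) (\big[Rplus/0]_(i <- r | P i) l i).
Proof.
move=> cv; elim: r => [|a s IH].
  by rewrite big_nil => e he; exists 0%nat => N _; rewrite big_nil /Rdist Rminus_0_r Rabs_R0.
rewrite big_cons; case Pa: (P a).
- by apply: Un_cv_ext (CV_plus _ _ _ _ (cv a) IH) => N; rewrite big_cons Pa.
- by apply: Un_cv_ext IH => N; rewrite big_cons Pa.
Qed.

End FiniteSums.

Lemma sumR_const_ord (N : nat) (c : R) : \big[Rplus/0]_(k < N) c = INR N * c.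
Proof.
rewrite big_const_ord; elim: N => [|N IH] /=; first by ring.
by rewrite IH; change (c + INR N * c = INR N.+1 * c); rewrite S_INR; ring.
Qed.

Lemma term_le_sumR (T : finType) (F : T -> R) (t : T) :
  (forall i, 0 <= F i) -> F t <= \big[Rplus/0]_(i : T) F i.
Proof.
move=> F_ge0; rewrite (bigD1 t) //=.
have := @sumR_ge0 T (index_enum T) (fun i => i != t) F (fun i _ => F_ge0 i); lra.
Qed.

Lemma Rsum_pos (T : finType) (F : T -> R) (t : T) : (forall i, 0 < F i) -> 0 < Rsum F.
Proof.
move=> F_gt0; apply: Rlt_le_trans (F_gt0 t) _.
by apply: term_le_sumR => i; apply: Rlt_le.
Qed.

Definition in_cube (Rb : R) (n : nat) (x : 'I_n -> R) : Prop := forall i, in_int Rb (x i).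

Section EmpiricalMean.
Variable N : nat.
Implicit Types f g : 'I_N -> R.

Lemma inv_INR_ge0 : 0 <= / INR N.
Proof.
case: N => [|M]; first by rewrite Rinv_0; lra.
by apply/Rlt_le/Rinv_0_lt_compat/lt_0_INR; lia.
Qed.

Lemma kappa_le f g : (forall k, f k <= g k) -> kappa f <= kappa g.
Proof.
by move=> fg; apply: Rmult_le_compat_l inv_INR_ge0 _; apply: sumR_le => k _.
Qed.

Lemma kappa_ge0 f : (forall k, 0 <= f k) -> 0 <= kappa f.
Proof.
by move=> f_ge0; apply: Rmult_le_pos inv_INR_ge0 _; apply: sumR_ge0 => k _.
Qed.

Lemma eq_kappa f g : (forall k, f k = g k) -> kappa f = kappa g.
Proof. by move=> fg; rewrite /kappa /Rsum (eq_bigr _ (fun k _ => fg k)). Qed.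

Lemma kappa_add f g : kappa (fun k => f k + g k) = kappa f + kappa g.
Proof. by rewrite /kappa /Rsum big_split /=; ring. Qed.

Lemma kappa_sub f g : kappa (fun k => f k - g k) = kappa f - kappa g.
Proof. by rewrite /kappa /Rsum sumR_sub; ring. Qed.

Lemma kappa_scal c f : kappa (fun k => c * f k) = c * kappa f.
Proof. by rewrite /kappa /Rsum -big_distrr /=; ring. Qed.

Lemma kappa_const c : (0 < N)%N -> kappa (fun _ : 'I_N => c) = c.
Proof.
move=> N_gt0; rewrite /kappa /Rsum sumR_const_ord -Rmult_assoc Rinv_l ?Rmult_1_l //.
by apply: not_0_INR => N0; rewrite N0 in N_gt0.
Qed.

Lemma kappa_abs f : Rabs (kappa f) <= kappa (fun k => Rabs (f k)).
Proof.
rewrite /kappa Rabs_mult Rabs_right; last exact: Rle_ge inv_INR_ge0.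
exact: Rmult_le_compat_l inv_INR_ge0 (sumR_abs _ _ _).
Qed.

Lemma kappa_sum (J : Type) (r : seq J) (F : J -> 'I_N -> R) :
  kappa (fun k => \big[Rplus/0]_(m <- r) F m k) = \big[Rplus/0]_(m <- r) kappa (F m).
Proof. by rewrite /kappa /Rsum exchange_big big_distrr. Qed.

Lemma kappa_perm (s : {perm 'I_N}) f : kappa (perm_act s f) = kappa f.
Proof.
rewrite /kappa /Rsum /perm_act (reindex_inj (@perm_inj _ s)) /=.
by under eq_bigr do rewrite permK.
Qed.

End EmpiricalMean.

Definition poly_eval (l : seq (R * nat)) (x : R) : R :=
  \big[Rplus/0]_(q <- l) (q.1 * x ^ q.2).

Definition is_poly (f : R -> R) : Prop := exists l, forall x, f x = poly_eval l x.

Lemma is_poly_ext f g : (forall x, f x = g x) -> is_poly f -> is_poly g.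
Proof. by move=> fg [l Hl]; exists l => x; rewrite -fg. Qed.

Lemma is_poly_const c : is_poly (fun _ => c).
Proof. by exists [:: (c, 0%N)] => x; rewrite /poly_eval big_cons big_nil /=; ring. Qed.

Lemma is_poly_id : is_poly (fun x => x).
Proof. by exists [:: (1, 1%N)] => x; rewrite /poly_eval big_cons big_nil /=; ring. Qed.

Lemma is_poly_add f g : is_poly f -> is_poly g -> is_poly (fun x => f x + g x).
Proof. by move=> [l1 H1] [l2 H2]; exists (l1 ++ l2) => x; rewrite H1 H2 /poly_eval big_cat. Qed.

Lemma is_poly_mul f g : is_poly f -> is_poly g -> is_poly (fun x => f x * g x).
Proof.
move=> [l1 H1] [l2 H2]; exists [seq (p.1 * q.1, (p.2 + q.2)%N) | p <- l1, q <- l2] => x.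
rewrite H1 H2 /poly_eval big_allpairs_dep big_distrl /=; apply: eq_bigr => p _.
by rewrite big_distrr /=; apply: eq_bigr => q _; rewrite pow_add; ring.
Qed.

Lemma is_poly_pow f k : is_poly f -> is_poly (fun x => f x ^ k).
Proof. by move=> Pf; elim: k => [|k IH] /=; [exact: is_poly_const | exact: is_poly_mul]. Qed.

Lemma kappa_poly_eval N (x : 'I_N -> R) l :
  kappa (fun k => poly_eval l (x k)) =
  \big[Rplus/0]_(q <- l) (q.1 * kappa (fun k => x k ^ q.2)).
Proof. by rewrite kappa_sum; apply: eq_bigr => q _; rewrite kappa_scal. Qed.

Definition moments_agree (x y : forall N : nat, 'I_N -> R) : Prop :=
  forall k, Un_cv (fun N => kappa (fun j => x N j ^ k) - kappa (fun j => y N j ^ k)) 0.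

Lemma approximating_moments_agree n Rb (mu : 'I_n -> ProbInt Rb) Xi Xi' :
  approximating mu Xi -> approximating mu Xi' -> forall i, moments_agree (Xi i) (Xi' i).
Proof.
move=> [_ mom] [_ mom'] i k.
by have := CV_minus _ _ _ _ (mom i k) (mom' i k); rewrite Rminus_diag.
Qed.

Lemma poly_means_agree x y p : moments_agree x y -> is_poly p ->
  Un_cv (fun N => kappa (fun j => p (x N j)) - kappa (fun j => p (y N j))) 0.
Proof.
move=> agree [l Hl].
have -> : 0 = \big[Rplus/0]_(q <- l) (q.1 * 0).
  by rewrite big1 // => q _; rewrite Rmult_0_r.
have cst c : Un_cv (fun _ => c) c.
  by move=> e e_gt0; exists 0%nat => N _; rewrite /Rdist Rminus_diag Rabs_R0.
apply: Un_cv_ext (sumR_cv _ _ (fun q => CV_mult _ _ _ _ (cst q.1) (agree q.2))) => N.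
rewrite (eq_kappa (fun j => Hl (x N j))) (eq_kappa (fun j => Hl (y N j))).
by rewrite !kappa_poly_eval -sumR_sub; apply: eq_bigr => q _; ring.
Qed.

(* Step polynomials: for 0 <= u <= 1, the polynomial (1 - u)^K stays near 1
   when K u is small and is tiny when K u is large. *)
Lemma bernoulli_ineq (u : R) (K : nat) : 0 <= u <= 1 -> 1 - INR K * u <= (1 - u) ^ K.
Proof.
move=> u01; elim: K => [|K IH]; first by simpl; lra.
rewrite S_INR /=.
have : (1 - u) * (1 - INR K * u) <= (1 - u) * (1 - u) ^ K by apply: Rmult_le_compat_l; lra.
have : 0 <= INR K * u * u by have := pos_INR K; nra.
nra.
Qed.

Lemma pow_le_exp (u : R) (K : nat) : 0 <= u <= 1 -> (1 - u) ^ K <= exp (- (INR K * u)).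
Proof.
move=> u01; elim: K => [|K IH]; first by rewrite /= Rmult_0_l Ropp_0 exp_0; lra.
rewrite S_INR /= Rmult_plus_distr_r Rmult_1_l Ropp_plus_distr Rplus_comm exp_plus.
apply: Rmult_le_compat; [lra | apply: pow_le; lra | have := exp_ineq1_le (- u); lra | exact: IH].
Qed.

Lemma pow_near_one (u eta : R) (K : nat) :
  0 <= u <= 1 -> INR K * u <= eta -> 1 - eta <= (1 - u) ^ K.
Proof. by move=> u01 small; have := bernoulli_ineq K u01; lra. Qed.

Lemma pow_near_zero (u eta : R) (K : nat) :
  0 <= u <= 1 -> 0 < eta -> / eta <= INR K * u -> (1 - u) ^ K <= eta.
Proof.
move=> u01 eta_gt0 large; apply: Rle_trans (pow_le_exp K u01) _.
have exp_large : / eta <= exp (INR K * u) by have := exp_ineq1_le (INR K * u); lra.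
rewrite exp_Ropp -(Rinv_inv eta); apply: Rinv_le_contravar => //.
exact: Rinv_0_lt_compat.
Qed.

Lemma pow01 (u : R) (k : nat) : 0 <= u <= 1 -> 0 <= u ^ k <= 1.
Proof. by move=> u01; split; [apply: pow_le | rewrite -(pow1 k); apply: pow_incr]; lra. Qed.

Lemma nat_between (z : R) : 0 <= z -> exists K : nat, z <= INR K <= z + 1.
Proof.
move=> z_ge0; case: (INR_unbounded z) => M; elim: M => [|M IH] zM; first by simpl in zM; lra.
case: (Rlt_le_dec z (INR M)) => [/IH // | Mz].
by exists M.+1; rewrite S_INR in zM *; lra.
Qed.

(* On [0,1], the polynomial (1 - s^m)^K is >= 1 - eta on [0,a] and <= eta on [b,1]:
   m makes (a/b)^m negligible, and K is of order 1 / (eta b^m). *)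
Lemma unit_step (a b eta : R) : 0 <= a -> a < b -> b <= 1 -> 0 < eta ->
  exists m K : nat,
    (forall s, 0 <= s <= a -> 1 - eta <= (1 - s ^ m) ^ K) /\
    (forall s, b <= s <= 1 -> (1 - s ^ m) ^ K <= eta).
Proof.
move=> a_ge0 ab b_le1 eta_gt0.
have ieta_gt0 := Rinv_0_lt_compat _ eta_gt0.
set r := a / b.
have r01 : 0 <= r < 1.
  have b_gt0 : 0 < b by lra.
  have e : r * b = a by rewrite /r; field; lra.
  split; first by apply: Rmult_le_pos; [|apply: Rlt_le; apply: Rinv_0_lt_compat]; lra.
  by apply: (Rmult_lt_reg_r b); lra.
have tol_gt0 : 0 < eta / (/ eta + 1) by apply: Rdiv_lt_0_compat; lra.
case: (pow_lt_1_zero r (ltac:(rewrite Rabs_right; lra)) _ tol_gt0) => m /(_ m (Nat.le_refl m)).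
rewrite Rabs_right; last by apply: Rle_ge; apply: pow_le; lra.
move=> rm_small.
have rm_eta : r ^ m * (/ eta + 1) < eta.
  have e : eta / (/ eta + 1) * (/ eta + 1) = eta by field; lra.
  by rewrite -{2}e; apply: Rmult_lt_compat_r; lra.
have bm01 : 0 <= b ^ m <= 1 by apply: pow01; lra.
have bm_gt0 : 0 < b ^ m by apply: pow_lt; lra.
have am : a ^ m = r ^ m * b ^ m by rewrite -Rpow_mult_distr /r; congr (_ ^ _); field; lra.
have z_gt0 : 0 < / (eta * b ^ m) by apply: Rinv_0_lt_compat; apply: Rmult_lt_0_compat.
case: (nat_between (Rlt_le _ _ z_gt0)) => K [K_ge K_le].
have e : / (eta * b ^ m) * b ^ m = / eta by field; lra.
have Kbm_ge : / eta <= INR K * b ^ m by rewrite -e; apply: Rmult_le_compat_r; lra.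
have Kbm_le : INR K * b ^ m <= / eta + 1.
  have : INR K * b ^ m <= (/ (eta * b ^ m) + 1) * b ^ m by apply: Rmult_le_compat_r; lra.
  nra.
exists m, K; split => s [s_ge0 s_le].
- apply: pow_near_one; first by apply: pow01; lra.
  have sm : s ^ m <= a ^ m by apply: pow_incr; lra.
  have := pos_INR K; have : 0 <= r ^ m by apply: pow_le; lra.
  rewrite am in sm; nra.
- apply: pow_near_zero => //; first by apply: pow01; lra.
  have : b ^ m <= s ^ m by apply: pow_incr; lra.
  have := pos_INR K; nra.
Qed.

Definition step_approx (Rb t g eta : R) (p : R -> R) : Prop :=
  [/\ forall x, in_int Rb x -> 0 <= p x <= 1,
      forall x, in_int Rb x -> x <= t -> 1 - eta <= p x &
      forall x, in_int Rb x -> t + g <= x -> p x <= eta].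

(* Approximate steps can be realized by polynomials: rescale [-Rb,Rb] to [0,1]
   and use unit_step. *)
Lemma step_poly (Rb t g eta : R) : 0 < Rb -> 0 < g -> 0 < eta ->
  exists p, is_poly p /\ step_approx Rb t g eta p.
Proof.
move=> Rb_gt0 g_gt0 eta_gt0.
case: (Rlt_le_dec Rb (t + g)) => [above | tg_le].
  exists (fun _ => 1); split; first exact: is_poly_const.
  by split=> x; rewrite /in_int => *; lra.
case: (Rlt_le_dec t (- Rb)) => [below | t_ge].
  exists (fun _ => 0); split; first exact: is_poly_const.
  by split=> x; rewrite /in_int => *; lra.
pose c := / (2 * Rb).
have c_gt0 : 0 < c by apply: Rinv_0_lt_compat; lra.
pose sc x := c * (x + Rb).
have sc_mono x y : x <= y -> sc x <= sc y by move=> xy; apply: Rmult_le_compat_l; lra.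
have sc01 x : in_int Rb x -> 0 <= sc x <= 1.
  move=> [x_ge x_le]; split; first by apply: Rmult_le_pos; lra.
  have : c * (2 * Rb) = 1 by rewrite /c; field; lra.
  by rewrite /sc; nra.
have sc_lt : sc t < sc (t + g) by apply: Rmult_lt_compat_l; lra.
have [sct_ge0 _] : 0 <= sc t <= 1 by apply: sc01; rewrite /in_int; lra.
have [_ sctg_le1] : 0 <= sc (t + g) <= 1 by apply: sc01; rewrite /in_int; lra.
case: (unit_step sct_ge0 sc_lt sctg_le1 eta_gt0) => m [K [near1 near0]].
exists (fun x => (1 - sc x ^ m) ^ K); split.
  apply: is_poly_pow; apply: (@is_poly_ext (fun x => 1 + -1 * sc x ^ m)).
    by move=> x; ring.
  apply: is_poly_add (is_poly_const 1) (is_poly_mul (is_poly_const (-1)) (is_poly_pow m _)).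
  exact: is_poly_mul (is_poly_const c) (is_poly_add is_poly_id (is_poly_const Rb)).
split=> x x_in.
- by apply: pow01; have := pow01 m (sc01 x x_in); lra.
- by move=> xt; apply: near1; split; [case: (sc01 x x_in) | apply: sc_mono].
- by move=> tgx; apply: near0; split; [apply: sc_mono | case: (sc01 x x_in)].
Qed.

Definition crossing (t g a b : R) : R :=
  if Rle_dec b t then (if Rle_dec (t + g) a then 1 else 0) else 0.

Definition far (d a b : R) : R := if Rle_dec d (Rabs (a - b)) then 1 else 0.

Lemma crossing_ge0 t g a b : 0 <= crossing t g a b.
Proof. by rewrite /crossing; do 2?case: Rle_dec => _ /=; lra. Qed.

Lemma far_ge0 d a b : 0 <= far d a b.
Proof. by rewrite /far; case: Rle_dec => _ /=; lra. Qed.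

Section Crossings.
Variables (Rb t g eta : R) (p : R -> R) (N : nat) (x y : 'I_N -> R).
Hypotheses (eta_ge0 : 0 <= eta) (p_step : step_approx Rb t g eta p).
Hypotheses (x_sorted : in_sorted_cube Rb x) (y_sorted : in_sorted_cube Rb y).

Lemma crossing_le_step (k0 : 'I_N) : y k0 <= t -> t + g <= x k0 ->
  forall k, crossing t g (x k) (y k) <= p (y k) - p (x k) + 2 * eta.
Proof.
case: p_step x_sorted y_sorted => p01 p_low p_high [x_in x_mono] [y_in y_mono] yk0 xk0 k.
have := p01 _ (x_in k); have := p01 _ (y_in k).
rewrite /crossing; case: Rle_dec => [ykt | _] /=.
  have := p_low _ (y_in k) ykt; case: Rle_dec => [xk | _] /=; last lra.
  by have := p_high _ (x_in k) xk; lra.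
case: (leqP k0 k) => [k0k | kk0].
- by have := p_high _ (x_in k) (Rle_trans _ _ _ xk0 (x_mono _ _ k0k)); lra.
- by have := p_low _ (y_in k) (Rle_trans _ _ _ (y_mono _ _ (ltnW kk0)) yk0); lra.
Qed.

Lemma crossing_mean : (0 < N)%N ->
  kappa (fun k => crossing t g (x k) (y k)) <=
  Rabs (kappa (fun k => p (y k)) - kappa (fun k => p (x k))) + 2 * eta.
Proof.
move=> N_gt0.
have abs_ge0 := Rabs_pos (kappa (fun k => p (y k)) - kappa (fun k => p (x k))).
case: (classic (exists k0, y k0 <= t /\ t + g <= x k0)) => [[k0 [yk0 xk0]] | no_cross].
  apply: Rle_trans (kappa_le (crossing_le_step yk0 xk0)) _.
  rewrite kappa_add kappa_sub kappa_const //.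
  by have := Rle_abs (kappa (fun k => p (y k)) - kappa (fun k => p (x k))); lra.
have -> : kappa (fun k => crossing t g (x k) (y k)) = kappa (fun _ : 'I_N => 0).
  apply: eq_kappa => k; rewrite /crossing.
  by do 2?case: Rle_dec => ? //=; case: no_cross; exists k.
by rewrite kappa_const //; lra.
Qed.

End Crossings.

Lemma grid_cell (Rb g z : R) (L : nat) : 0 < g -> - Rb <= z <= - Rb + INR L * g ->
  exists m : 'I_L.+1, - Rb + INR m * g - g <= z <= - Rb + INR m * g.
Proof.
move=> g_gt0; elim: L => [|L IH] z_in.
  by exists ord0; simpl in z_in |- *; lra.
case: (Rle_dec z (- Rb + INR L * g)) => [z_le | z_gt].
  by case: IH; [lra | move=> m m_cell; exists (widen_ord (leqnSn _) m)].
exists ord_max; rewrite (_ : INR ord_max = INR L + 1); last exact: S_INR.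
by rewrite S_INR in z_in; lra.
Qed.

Lemma far_le_crossings (Rb g a b : R) (L : nat) :
  0 < g -> 2 * Rb <= INR L * g -> in_int Rb a -> in_int Rb b ->
  far (2 * g) a b <= \big[Rplus/0]_(m < L.+1)
    (crossing (- Rb + INR m * g) g a b + crossing (- Rb + INR m * g) g b a).
Proof.
move=> g_gt0 grid_covers [a_ge a_le] [b_ge b_le].
have terms_ge0 (m : 'I_L.+1) :
    0 <= crossing (- Rb + INR m * g) g a b + crossing (- Rb + INR m * g) g b a.
  have := crossing_ge0 (- Rb + INR m * g) g a b.
  by have := crossing_ge0 (- Rb + INR m * g) g b a; lra.
rewrite /far; case: Rle_dec => [far_ab | _] /=; last by apply: sumR_ge0.
have one_crossing (u v : R) : - Rb <= v <= Rb -> v + 2 * g <= u ->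
    exists m : 'I_L.+1, crossing (- Rb + INR m * g) g u v = 1.
  move=> v_in vu; case: (@grid_cell Rb g v L g_gt0) => [|m m_cell]; first lra.
  by exists m; rewrite /crossing; do 2?case: Rle_dec => ? /=; lra.
case: (Rle_dec (b + 2 * g) a) => [ba | ab].
- case: (one_crossing a b) => // m cross.
  apply: Rle_trans (term_le_sumR m terms_ge0); rewrite cross.
  by have := crossing_ge0 (- Rb + INR m * g) g b a; lra.
- case: (one_crossing b a) => [|| m cross] //.
    by move: far_ab; rewrite /Rabs; case: Rcase_abs => ?; lra.
  apply: Rle_trans (term_le_sumR m terms_ge0); rewrite cross.
  by have := crossing_ge0 (- Rb + INR m * g) g a b; lra.
Qed.

Lemma far_mean (Rb g eta : R) (L : nat) (p : 'I_L.+1 -> R -> R) (N : nat) (x y : 'I_N -> R) :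
  0 < g -> 2 * Rb <= INR L * g -> 0 <= eta -> (0 < N)%N ->
  (forall m : 'I_L.+1, step_approx Rb (- Rb + INR m * g) g eta (p m)) ->
  in_sorted_cube Rb x -> in_sorted_cube Rb y ->
  kappa (fun k => far (2 * g) (x k) (y k)) <=
  \big[Rplus/0]_(m < L.+1)
    (2 * Rabs (kappa (fun k => p m (x k)) - kappa (fun k => p m (y k))) + 4 * eta).
Proof.
move=> g_gt0 grid_covers eta_ge0 N_gt0 p_step x_sorted y_sorted.
apply: Rle_trans (kappa_le (fun k => far_le_crossings g_gt0 grid_covers
  (proj1 x_sorted k) (proj1 y_sorted k))) _.
rewrite kappa_sum; apply: sumR_le => m _; rewrite kappa_add.
have := crossing_mean eta_ge0 (p_step m) x_sorted y_sorted N_gt0.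
have := crossing_mean eta_ge0 (p_step m) y_sorted x_sorted N_gt0.
by rewrite (Rabs_minus_sym (kappa (fun k => p m (x k)))); lra.
Qed.

Lemma far_mean_vanishes (Rb d : R) (x y : forall N : nat, 'I_N -> R) :
  0 < Rb -> 0 < d -> (forall N, in_sorted_cube Rb (x N)) -> (forall N, in_sorted_cube Rb (y N)) ->
  moments_agree x y -> Un_cv (fun N => kappa (fun k => far d (x N k) (y N k))) 0.
Proof.
move=> Rb_gt0 d_gt0 x_sorted y_sorted agree eps eps_gt0.
pose g := d / 2; have g_gt0 : 0 < g by rewrite /g; lra.
have -> : d = 2 * g by rewrite /g; field.
case: (INR_unbounded (2 * Rb / g)) => L L_large.
have grid_covers : 2 * Rb <= INR L * g.
  have e : 2 * Rb / g * g = 2 * Rb by field; lra.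
  by rewrite -e; apply: Rmult_le_compat_r; lra.
have L1_gt0 : 0 < INR L + 1 by have := pos_INR L; lra.
pose eta := eps / (8 * (INR L + 1)).
have eta_gt0 : 0 < eta by apply: Rdiv_lt_0_compat; lra.
(* approximate steps at the grid levels -Rb + m g, with tolerance eta chosen so
   that the grid as a whole contributes at most eps/2 *)
case: (@fin_all_exists 'I_L.+1 (fun=> R -> R)
  (fun m q => is_poly q /\ step_approx Rb (- Rb + INR m * g) g eta q)) => [m | p p_step].
  exact: step_poly.
pose E N := \big[Rplus/0]_(m < L.+1)
  Rabs (kappa (fun k => p m (x N k)) - kappa (fun k => p m (y N k))).
have E_cv : Un_cv E 0.
  have -> : 0 = \big[Rplus/0]_(m < L.+1) Rabs 0 by rewrite Rabs_R0 big1.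
  apply: sumR_cv => m; apply: cv_cvabs.
  exact: poly_means_agree agree (proj1 (p_step m)).
case: (E_cv (eps / 4)) => [|N0 E_small]; first lra.
exists (Nat.max N0 1) => N N_large.
have N_gt0 : (0 < N)%N by apply/ltP; lia.
have := E_small N (Nat.le_trans _ _ _ (Nat.le_max_l _ _) N_large).
have far_ge0 := kappa_ge0 (fun k => far_ge0 (2 * g) (x N k) (y N k)).
have := far_mean g_gt0 grid_covers (Rlt_le _ _ eta_gt0) N_gt0
  (fun m => proj2 (p_step m)) (x_sorted N) (y_sorted N).
rewrite big_split /= -big_distrr sumR_const_ord S_INR /= -/(E N).
have e : (INR L + 1) * (4 * eta) = eps / 2 by rewrite /eta; field; lra.
rewrite /Rdist !Rminus_0_r !Rabs_right; [lra | lra |].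
by apply: Rle_ge; apply: sumR_ge0 => m _; apply: Rabs_pos.
Qed.

(* Heine-Cantor on the cube [-Rb,Rb]^n, by bisection: if uniform continuity
   failed for some eps, a nested sequence of subcubes, each carrying
   eps-oscillations at every scale, would shrink to a point of discontinuity. *)
Section HeineCantor.
Variables (n : nat) (Rb eps : R) (h : ('I_n -> R) -> R).
Hypotheses (Rb_gt0 : 0 < Rb) (h_cont : cont_cube Rb h) (eps_gt0 : 0 < eps).

Definition side (k : nat) : R := 2 * Rb * (/ 2) ^ k.

Lemma side_gt0 k : 0 < side k.
Proof. by apply: Rmult_lt_0_compat; [lra | apply: pow_lt; lra]. Qed.

Lemma sideS k : side k.+1 = side k / 2.
Proof. by rewrite /side /=; field. Qed.

Definition oscillating_at (c : 'I_n -> R) (k : nat) (d : R) : Prop :=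
  exists a b : 'I_n -> R,
    [/\ forall i, c i <= a i <= c i + side k, in_cube Rb a, in_cube Rb b,
        forall i, Rabs (a i - b i) < d & eps <= Rabs (h a - h b)].

Definition oscillating (c : 'I_n -> R) (k : nat) : Prop :=
  forall d, 0 < d -> oscillating_at c k d.

Definition subcube (c c' : 'I_n -> R) (k : nat) : Prop :=
  forall i, c i <= c' i /\ c' i + side k.+1 <= c i + side k.

(* One of the 2^n halves of an oscillating subcube is oscillating: otherwise
   each half f has a scale D f without oscillation, and a scale below all of
   them would contradict the oscillation of the whole subcube. *)
Lemma oscillating_half c k : oscillating c k -> exists c', subcube c c' k /\ oscillating c' k.+1.
Proof.
move=> osc; apply: NNPP => no_half.
pose half (f : {ffun 'I_n -> bool}) i := c i + (if f i then side k.+1 else 0).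
have no_osc f : exists d, 0 < d /\ ~ oscillating_at (half f) k.+1 d.
  apply: NNPP => osc_f; apply: no_half; exists (half f); split.
    by move=> i; rewrite /half sideS; have := side_gt0 k; case: (f i); lra.
  by move=> d d_gt0; apply: NNPP => no_at; apply: osc_f; exists d.
case: (@fin_all_exists {ffun 'I_n -> bool} (fun=> R)
  (fun f d => 0 < d /\ ~ oscillating_at (half f) k.+1 d) no_osc) => D D_spec.
pose S := \big[Rplus/0]_(f : {ffun 'I_n -> bool}) / D f.
have invD_le f : / D f <= S.
  apply: (@term_le_sumR _ (fun f => / D f)) => f'.
  exact/Rlt_le/Rinv_0_lt_compat/(proj1 (D_spec f')).
have S_gt0 : 0 < S.
  by apply: Rlt_le_trans (invD_le [ffun=> true]); apply/Rinv_0_lt_compat/(proj1 (D_spec _)).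
case: (osc (/ S) (Rinv_0_lt_compat _ S_gt0)) => a [b [a_in a_cube b_cube ab_close ab_osc]].
pose f := [ffun i => if Rlt_dec (c i + side k.+1) (a i) then true else false].
apply: (proj2 (D_spec f)); exists a, b; split => // [i | i].
- rewrite /half ffunE; have := a_in i; rewrite sideS.
  by case: Rlt_dec => /= ?; rewrite ?sideS; lra.
- apply: Rlt_le_trans (ab_close i) _.
  have D_gt0 := proj1 (D_spec f).
  rewrite -(Rinv_inv (D f)); apply: Rinv_le_contravar => //.
  exact: Rinv_0_lt_compat.
Qed.

(* A choice of oscillating half, defined for every subcube so that the nested
   sequence below can be defined by recursion. *)
Lemma half_exists c k : exists c', oscillating c k -> subcube c c' k /\ oscillating c' k.+1.
Proof.
case: (classic (oscillating c k)) => [/oscillating_half [c' ?] | ?]; last by exists c.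
by exists c'.
Qed.

Definition next_corner (c : 'I_n -> R) (k : nat) : 'I_n -> R :=
  proj1_sig (constructive_indefinite_description _ (half_exists c k)).

Fixpoint corner (k : nat) : 'I_n -> R :=
  if k is k'.+1 then next_corner (corner k') k' else fun _ => - Rb.

Section Nested.
Hypothesis cube_oscillating : oscillating (fun _ => - Rb) 0.

Lemma corner_spec k : oscillating (corner k) k /\ subcube (corner k) (corner k.+1) k.
Proof.
have step c k' : oscillating c k' -> subcube c (next_corner c k') k' /\
    oscillating (next_corner c k') k'.+1.
  exact: proj2_sig (constructive_indefinite_description _ (half_exists c k')).
suff osc k' : oscillating (corner k') k' by split; [|case: (step _ _ (osc k))].
by elim: k' => [|k' IH] //=; case: (step _ _ IH).
Qed.

Lemma corner_nested i k j : (k <= j)%coq_nat ->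
  corner k i <= corner j i /\ corner j i + side j <= corner k i + side k.
Proof.
elim: j => [|j IH] kj; first by rewrite (_ : k = 0%nat); [split; lra | lia].
case: (Nat.eq_dec k j.+1) => [-> | kj']; first lra.
have := IH ltac:(lia); have := proj2 (corner_spec j) i; lra.
Qed.

Lemma corner_limit : exists x, in_cube Rb x /\
  forall i k, corner k i <= x i <= corner k i + side k.
Proof.
have side0 : side 0 = 2 * Rb by rewrite /side /=; ring.
have grow i : Un_growing (fun k => corner k i).
  by move=> k; exact: (proj1 (corner_nested i (Nat.le_succ_diag_r k))).
have bounded i : has_ub (fun k => corner k i).
  exists Rb => _ [k ->]; have := corner_nested i (Nat.le_0_l k); have := side_gt0 k.
  by rewrite side0 /=; lra.
pose x i := proj1_sig (growing_cv _ (grow i) (bounded i)).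
have x_cv i : Un_cv (fun k => corner k i) (x i) := proj2_sig (growing_cv _ (grow i) (bounded i)).
have x_in i k : corner k i <= x i <= corner k i + side k.
  split; first exact: growing_ineq (grow i) (x_cv i) k.
  apply: Rnot_lt_le => too_big.
  case: (x_cv i (x i - (corner k i + side k))) => [|K K_cv]; first lra.
  have := K_cv (Nat.max K k) (Nat.le_max_l _ _); have := side_gt0 (Nat.max K k).
  have := corner_nested i (Nat.le_max_r K k).
  by rewrite /Rdist /Rabs; case: Rcase_abs => ?; lra.
exists x; split=> // i; have := x_in i 0%nat; rewrite side0 /in_int /=; lra.
Qed.

(* h would be discontinuous at the limit point. *)
Lemma nested_oscillation_absurd : False.
Proof.
case: corner_limit => x [x_cube x_in].
have eps2_gt0 : 0 < eps / 2 by lra.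
case: (h_cont x_cube eps2_gt0) => d [d_gt0 cont_x].
have small_side : exists k, side k < d / 2.
  have q_gt0 : 0 < d / (4 * Rb) by apply: Rdiv_lt_0_compat; lra.
  case: (pow_lt_1_zero (/ 2) ltac:(rewrite Rabs_right; lra) _ q_gt0) => k /(_ k (Nat.le_refl k)).
  rewrite Rabs_right; last by apply: Rle_ge; apply: pow_le; lra.
  move=> pow_small; exists k.
  have : side k < 2 * Rb * (d / (4 * Rb)) by apply: Rmult_lt_compat_l; lra.
  have e : 2 * Rb * (d / (4 * Rb)) = d / 2 by field; lra.
  lra.
case: small_side => k side_small.
case: (proj1 (corner_spec k) (d / 2)) => [|a [b [a_in a_cube b_cube ab_close ab_osc]]]; first lra.
have xa i : Rabs (x i - a i) < d / 2.
  by have := x_in i k; have := a_in i; rewrite /Rabs; case: Rcase_abs => ?; lra.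
have xb i : Rabs (x i - b i) < d.
  have := Rabs_triang (x i - a i) (a i - b i); have := xa i; have := ab_close i.
  by rewrite (_ : x i - a i + (a i - b i) = x i - b i); [lra | ring].
have d2_lt : d / 2 < d by lra.
have := cont_x a a_cube (fun i => Rlt_trans _ _ _ (xa i) d2_lt).
have := cont_x b b_cube xb.
have := Rabs_triang (h x - h a) (h b - h x).
rewrite (_ : h x - h a + (h b - h x) = - (h a - h b)); last ring.
by rewrite Rabs_Ropp (Rabs_minus_sym (h b)); lra.
Qed.

End Nested.

Lemma uniform_continuity : exists d, 0 < d /\ forall a b, in_cube Rb a -> in_cube Rb b ->
  (forall i, Rabs (a i - b i) < d) -> Rabs (h a - h b) < eps.
Proof.
apply: NNPP => no_modulus; apply: nested_oscillation_absurd => d d_gt0.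
apply: NNPP => no_osc; apply: no_modulus; exists d; split=> // a b a_cube b_cube ab_close.
apply: Rnot_le_lt => ab_osc; apply: no_osc; exists a, b; split=> // i.
by have := a_cube i; rewrite /side /in_int /=; lra.
Qed.

End HeineCantor.

(* A continuous function on the cube is bounded: along the segment from 0 to a,
   cut into L steps shorter than the modulus of uniform continuity for 1,
   h varies by less than L. *)
Lemma cube_bounded (n : nat) (Rb : R) (h : ('I_n -> R) -> R) : 0 < Rb -> cont_cube Rb h ->
  exists M, 0 <= M /\ forall a, in_cube Rb a -> Rabs (h a) <= M.
Proof.
move=> Rb_gt0 h_cont.
case: (uniform_continuity Rb_gt0 h_cont Rlt_0_1) => d [d_gt0 ucont].
case: (INR_unbounded (Rb / d)) => L0 L0_large; pose L := L0.+1.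
have L_gt0 : 0 < INR L by apply: lt_0_INR; lia.
have L_large : Rb < d * INR L.
  have e : Rb / d * d = Rb by field; lra.
  rewrite /L S_INR; rewrite -e; nra.
exists (Rabs (h (fun _ => 0)) + INR L); split; first by have := Rabs_pos (h (fun _ => 0)); lra.
move=> a a_cube; pose scaled (j : nat) i := INR j / INR L * a i.
have scaled_cube j : (j <= L)%coq_nat -> in_cube Rb (scaled j).
  move=> jL i; have [a_ge a_le] := a_cube i.
  have jL01 : 0 <= INR j / INR L <= 1.
    split; first by apply: Rmult_le_pos; [apply: pos_INR | apply/Rlt_le/Rinv_0_lt_compat].
    have e : INR L / INR L = 1 by field; lra.
    rewrite -e; apply: Rmult_le_compat_r; [apply/Rlt_le/Rinv_0_lt_compat | apply: le_INR] => //.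
  by rewrite /in_int /scaled; nra.
have step j : (j < L)%coq_nat -> Rabs (h (scaled j.+1) - h (scaled j)) < 1.
  move=> jL; apply: ucont; [apply: scaled_cube; lia | apply: scaled_cube; lia |] => i.
  rewrite /scaled S_INR (_ : (INR j + 1) / INR L * a i - INR j / INR L * a i = a i / INR L);
    last by field; lra.
  have e : a i / INR L * INR L = a i by field; lra.
  have [a_ge a_le] := a_cube i.
  by apply: Rabs_def1; apply: (Rmult_lt_reg_r (INR L)) => //; rewrite e; nra.
have chain j : (j <= L)%coq_nat -> Rabs (h (scaled j) - h (scaled 0%nat)) <= INR j.
  elim: j => [|j IH] jL; first by rewrite Rminus_diag Rabs_R0; apply: Rle_refl.
  have := Rabs_triang (h (scaled j.+1) - h (scaled j)) (h (scaled j) - h (scaled 0%nat)).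
  rewrite (_ : _ + _ = h (scaled j.+1) - h (scaled 0%nat)); last ring.
  have jL1 : (j <= L)%coq_nat by lia.
  have jL2 : (j < L)%coq_nat by lia.
  by have := IH jL1; have := step j jL2; rewrite S_INR; lra.
have scaled0 : scaled 0%nat = fun _ => 0.
  by apply: functional_extensionality => i; rewrite /scaled /Rdiv /= !Rmult_0_l.
have scaledL : scaled L = a.
  by apply: functional_extensionality => i; rewrite /scaled; field; lra.
have := chain L (Nat.le_refl L); rewrite scaled0 scaledL.
have := Rabs_triang (h a - h (fun _ => 0)) (h (fun _ => 0)).
by rewrite (_ : _ + _ = h a); [lra | ring].
Qed.

Lemma oscillation_bound (n : nat) (Rb M d eps : R) (h : ('I_n -> R) -> R) (a b : 'I_n -> R) :
  0 < eps -> 0 <= M -> (forall c, in_cube Rb c -> Rabs (h c) <= M) ->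
  (forall c c', in_cube Rb c -> in_cube Rb c' ->
     (forall i, Rabs (c i - c' i) < d) -> Rabs (h c - h c') < eps) ->
  in_cube Rb a -> in_cube Rb b ->
  Rabs (h a - h b) <= eps + 2 * M * \big[Rplus/0]_(i < n) far d (a i) (b i).
Proof.
move=> eps_gt0 M_ge0 h_bound ucont a_cube b_cube.
have far_sum_ge0 : 0 <= \big[Rplus/0]_(i < n) far d (a i) (b i).
  by apply: sumR_ge0 => i _; apply: far_ge0.
case: (classic (forall i, Rabs (a i - b i) < d)) => [close | /not_all_ex_not [i far_i]].
  by have := ucont a b a_cube b_cube close; nra.
have far1 : far d (a i) (b i) = 1.
  by rewrite /far; case: Rle_dec => // not_far; case: far_i; exact: Rnot_le_lt.
have far_sum_ge1 : 1 <= \big[Rplus/0]_(j < n) far d (a j) (b j).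
  by rewrite -far1; apply: (term_le_sumR i (fun j => far_ge0 d (a j) (b j))).
have : Rabs (h a - h b) <= Rabs (h a) + Rabs (h b).
  by rewrite -(Rabs_Ropp (h b)); exact: Rabs_triang.
have := Rmult_le_compat_l _ _ _ M_ge0 far_sum_ge1.
by have := h_bound a a_cube; have := h_bound b b_cube; lra.
Qed.

Lemma kappa_h_close (n N : nat) (Rb M d eps : R) (h : ('I_n -> R) -> R) (x y : 'I_n -> 'I_N -> R) :
  (0 < N)%N -> 0 < eps -> 0 <= M -> (forall c, in_cube Rb c -> Rabs (h c) <= M) ->
  (forall c c', in_cube Rb c -> in_cube Rb c' ->
     (forall i, Rabs (c i - c' i) < d) -> Rabs (h c - h c') < eps) ->
  (forall k, in_cube Rb (fun i => x i k)) -> (forall k, in_cube Rb (fun i => y i k)) ->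
  Rabs (kappa_h h x - kappa_h h y) <=
  eps + 2 * M * \big[Rplus/0]_(i < n) kappa (fun k => far d (x i k) (y i k)).
Proof.
move=> N_gt0 eps_gt0 M_ge0 h_bound ucont x_cube y_cube.
rewrite /kappa_h -kappa_sub; apply: Rle_trans (kappa_abs _) _.
apply: Rle_trans (kappa_le (fun k =>
  oscillation_bound eps_gt0 M_ge0 h_bound ucont (x_cube k) (y_cube k))) _.
by rewrite kappa_add kappa_const // kappa_scal kappa_sum; apply: Rle_refl.
Qed.

Lemma kappa_h_perm_close (n : nat) (Rb : R) (mu : 'I_n -> ProbInt Rb) (h : ('I_n -> R) -> R)
    (Xi Xi' : 'I_n -> forall N : nat, 'I_N -> R) :
  0 < Rb -> cont_cube Rb h -> approximating mu Xi -> approximating mu Xi' ->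
  forall c, 0 < c -> exists N0, forall N, (N0 <= N)%N -> forall s : {ffun 'I_n -> {perm 'I_N}},
    Rabs (kappa_h h (fun i => perm_act (s i) (Xi i N)) -
          kappa_h h (fun i => perm_act (s i) (Xi' i N))) <= c.
Proof.
move=> Rb_gt0 h_cont approx approx' c c_gt0.
case: (cube_bounded Rb_gt0 h_cont) => M [M_ge0 h_bound].
have c2_gt0 : 0 < c / 2 by lra.
case: (uniform_continuity Rb_gt0 h_cont c2_gt0) => d [d_gt0 ucont].
pose F N := \big[Rplus/0]_(i < n) kappa (fun k => far d (Xi i N k) (Xi' i N k)).
have F_cv : Un_cv F 0.
  have -> : 0 = \big[Rplus/0]_(i < n) 0 by rewrite big1.
  apply: sumR_cv => i; apply: (@far_mean_vanishes Rb d (Xi i) (Xi' i)) => //.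
  - exact: (proj1 approx i).
  - exact: (proj1 approx' i).
  - exact: approximating_moments_agree approx approx' i.
case: (F_cv (c / (4 * (M + 1)))) => [|N0 F_small]; first by apply: Rdiv_lt_0_compat; lra.
exists (maxn N0 1) => N N_large s.
have N_gt0 : (0 < N)%N by apply: leq_trans N_large; rewrite leq_maxr.
have perm_cube (X : 'I_n -> forall N, 'I_N -> R) : approximating mu X ->
    forall k, in_cube Rb (fun i => perm_act (s i) (X i N) k).
  by move=> [X_sorted _] k i; exact: (proj1 (X_sorted i N)).
apply: Rle_trans (kappa_h_close N_gt0 c2_gt0 M_ge0 h_bound ucont
  (perm_cube _ approx) (perm_cube _ approx')) _.
have -> : \big[Rplus/0]_(i < n) kappa (fun k => far d (perm_act (s i) (Xi i N) k)
    (perm_act (s i) (Xi' i N) k)) = F N.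
  by apply: eq_bigr => i _; exact: kappa_perm (s i) (fun k => far d (Xi i N k) (Xi' i N k)).
have F_ge0 : 0 <= F N by apply: sumR_ge0 => i _; apply: kappa_ge0 => k; apply: far_ge0.
have F_lt : F N < c / (4 * (M + 1)).
  have := F_small N (leP (leq_trans (leq_maxl _ _) N_large)).
  by rewrite /Rdist Rminus_0_r Rabs_right //; apply: Rle_ge.
have : F N * (4 * (M + 1)) < c.
  have e : c / (4 * (M + 1)) * (4 * (M + 1)) = c by field; lra.
  by rewrite -{1}e; apply: Rmult_lt_compat_r => //; lra.
nra.
Qed.

Lemma exp_le_mono (x y : R) : x <= y -> exp x <= exp y.
Proof. by case/Rle_lt_or_eq_dec => [/exp_increasing/Rlt_le | ->] //; apply: Rle_refl. Qed.

Lemma ln_le_mono (x y : R) : 0 < x -> x <= y -> ln x <= ln y.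
Proof.
move=> x_gt0; case/Rle_lt_or_eq_dec => [/(ln_increasing _ _ x_gt0)/Rlt_le | ->] //.
exact: Rle_refl.
Qed.

Lemma log_sum_exp_le (T : finType) (t0 : T) (F G : T -> R) (c : R) :
  (forall t, F t <= G t + c) ->
  ln (Rsum (fun t => exp (F t))) <= ln (Rsum (fun t => exp (G t))) + c.
Proof.
move=> FG.
have G_pos : 0 < Rsum (fun t => exp (G t)) by apply: (Rsum_pos t0) => t; exact: exp_pos.
have F_pos : 0 < Rsum (fun t => exp (F t)) by apply: (Rsum_pos t0) => t; exact: exp_pos.
rewrite -(ln_exp c) -ln_mult //; last exact: exp_pos.
apply: (ln_le_mono F_pos); rewrite Rmult_comm /Rsum big_distrr; apply: sumR_le => t _ /=.
by rewrite -exp_plus; apply: exp_le_mono; have := FG t; lra.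
Qed.

Lemma log_sum_exp_close (T : finType) (t0 : T) (F G : T -> R) (c : R) :
  (forall t, Rabs (F t - G t) <= c) ->
  Rabs (ln (Rsum (fun t => exp (F t))) - ln (Rsum (fun t => exp (G t)))) <= c.
Proof.
move=> FG.
have FG_le t : F t <= G t + c by have := FG t; rewrite /Rabs; case: Rcase_abs => ?; lra.
have GF_le t : G t <= F t + c by have := FG t; rewrite /Rabs; case: Rcase_abs => ?; lra.
have := log_sum_exp_le t0 FG_le; have := log_sum_exp_le t0 GF_le.
by move=> *; apply: Rabs_le; split; lra.
Qed.

Lemma pressure_term_close (n : nat) (h : ('I_n -> R) -> R)
    (Xi Xi' : 'I_n -> forall N : nat, 'I_N -> R) (N : nat) (c : R) :
  (0 < N)%N ->
  (forall s : {ffun 'I_n -> {perm 'I_N}},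
     Rabs (kappa_h h (fun i => perm_act (s i) (Xi i N)) -
           kappa_h h (fun i => perm_act (s i) (Xi' i N))) <= c) ->
  Rabs (pressure_term h Xi N - pressure_term h Xi' N) <= c.
Proof.
move=> N_gt0 close.
have N_pos : 0 < INR N by apply: lt_0_INR; apply/ltP.
have fact_pos : 0 < / INR N`! ^ n.
  by apply/Rinv_0_lt_compat/pow_lt/lt_0_INR/ltP; exact: fact_gt0.
pose s0 : {ffun 'I_n -> {perm 'I_N}} := [ffun=> 1%g].
have sum_pos (X : 'I_n -> forall N : nat, 'I_N -> R) :
    0 < Rsum (fun s : {ffun 'I_n -> {perm 'I_N}} =>
    exp (INR N * kappa_h h (fun i => perm_act (s i) (X i N)))).
  by apply: (Rsum_pos s0) => s; exact: exp_pos.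
rewrite /pressure_term !ln_mult // -Rmult_minus_distr_l.
rewrite (_ : forall a b b', a + b - (a + b') = b - b'); last by move=> *; ring.
rewrite Rabs_mult Rabs_right; last exact/Rle_ge/Rlt_le/Rinv_0_lt_compat.
apply: (Rmult_le_reg_l (INR N)) => //; rewrite -Rmult_assoc Rinv_r ?Rmult_1_l; last lra.
apply: (log_sum_exp_close s0) => s.
rewrite -Rmult_minus_distr_l Rabs_mult Rabs_right; last lra.
by apply: Rmult_le_compat_l; [lra | exact: close].
Qed.

Lemma is_limsup_transfer (u v : nat -> R) (l : R) :
  (forall c, 0 < c -> exists N0, forall N, (N0 <= N)%N -> Rabs (u N - v N) <= c) ->
  is_limsup u l -> is_limsup v l.
Proof.
move=> uv u_limsup eps eps_gt0.
case: (uv (eps / 2)) => [|N0 close]; first lra.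
case: (u_limsup (eps / 2)) => [|[M above] below]; first lra.
have close_bounds N : (N0 <= N)%N -> u N - eps / 2 <= v N <= u N + eps / 2.
  by move=> /close; rewrite /Rabs; case: Rcase_abs => ? ?; split; lra.
split.
- exists (maxn M N0) => N N_large.
  have := above N (leq_trans (leq_maxl _ _) N_large).
  by have := close_bounds N (leq_trans (leq_maxr _ _) N_large); lra.
- move=> M'; case: (below (maxn M' N0)) => N [N_large u_large].
  exists N; split; first exact: leq_trans (leq_maxl _ _) N_large.
  by have := close_bounds N (leq_trans (leq_maxr _ _) N_large); lra.
Qed.

Theorem lemma1p2 (Rb : R) (n : nat) (hRb : 0 < Rb)
    (mu : 'I_n -> ProbInt Rb) (h : ('I_n -> R) -> R) (hh : cont_cube Rb h)
    (Xi Xi' : 'I_n -> forall N : nat, 'I_N -> R)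
    (hXi : approximating mu Xi) (hXi' : approximating mu Xi') :
  forall l : R, is_limsup (pressure_term h Xi) l <-> is_limsup (pressure_term h Xi') l.
Proof.
have terms_close c : 0 < c -> exists N0, forall N, (N0 <= N)%N ->
    Rabs (pressure_term h Xi N - pressure_term h Xi' N) <= c.
  move=> c_gt0; case: (kappa_h_perm_close hRb hh hXi hXi' c_gt0) => N0 close.
  exists (maxn N0 1) => N N_large; apply: pressure_term_close.
    by apply: leq_trans N_large; rewrite leq_maxr.
  by apply: close; apply: leq_trans N_large; rewrite leq_maxl.
move=> l; split; apply: is_limsup_transfer => c /terms_close [N0 close];
  exists N0 => N /close //; by rewrite Rabs_minus_sym.
Qed.
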